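(* Let $n\in\mathbb{N}$ and let $x,y\in\{0,1\}^n$ with ${\sf dist}(x,y)=1$. Then ${\sf dist}({\sf signature}(x),{\sf signature}(y))\le 3$ (Hamming distance of strings over the alphabet $\{0,1,\sqcup\}$). Consequently, writing $C_x=\{c_k,c_{k+1},\dots,c_{n-k}\}$ and $C_y=\{c'_{k'},\dots,c'_{n-k'}\}$ for the chains containing $x$ and $y$ (with $|c_j|=j$ and $|c'_{j}|=j$), we have (1) $|k-k'|\le 1$, and (2) for all $j\in[k,n-k]$ and $j'\in[k',n-k']$, ${\sf dist}(c_j,c'_{j'})\le |j-j'|+6$.
   Context: ${\sf dist}$ is Hamming distance, $|z|$ the Hamming weight. Marking: for $x\in\{0,1\}^n$, regard each $1$ as an opening parenthesis and each $0$ as a closing parenthesis; a coordinate is marked if its symbol is matched in the standard parenthesis matching (equivalently: repeatedly pick a pair of coordinates $i<i'$ with $x_i=1$, $x_{i'}=0$ that are adjacent among the currently unmarked coordinates, mark both, and continue until no such pair remains; the resulting set of marked coordinates does not depend on the choices). The unmarked coordinates of $x$, read left to right, then form a string $0\cdots01\cdots1$. The signature ${\sf signature}(x)\in\{0,1,\sqcup\}^n$ has $i$-th entry $x_i$ if coordinate $i$ is marked and $\sqcup$ otherwise. The chain $C_x$ is the set of all $y\in\{0,1\}^n$ with ${\sf signature}(y)={\sf signature}(x)$; equivalently, all strings that agree with $x$ on its marked coordinates and whose restriction to the unmarked coordinates has the form $0\cdots01\cdots1$. If $x$ has $2k$ marked coordinates, $C_x=\{c_k,\dots,c_{n-k}\}$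 where $c_j$ is the unique element of weight $j$ (this is the de Bruijn–Tengbergen–Kruyswijk symmetric chain partition). *)

From mathcomp Require Import all_boot.
Set Implicit Arguments. Unset Strict Implicit. Unset Printing Implicit Defensive.

(* Binary strings of length n: n.-tuple bool (true = 1, false = 0).
   Coordinates are 0-indexed: 0 .. n-1. *)

Definition dist (T : eqType) (s t : seq T) : nat :=
  count (fun p => p.1 != p.2) (zip s t).

Definition weight (s : seq bool) : nat := count id s.

(* Standard parenthesis matching (1 = '(' , 0 = ')') via a stack:
   scanning left to right, a 1 pushes its index; a 0 pops the most recent
   unmatched 1 (if any) and both get marked. *)
Fixpoint match_aux (s : seq bool) (i : nat) (stk marked : seq nat) : seq nat :=
  match s with
  | [::] => marked
  | b :: s' =>
      if b then match_aux s' i.+1 (i :: stk) marked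
      else match stk with
           | [::] => match_aux s' i.+1 [::] marked
           | j :: stk' => match_aux s' i.+1 stk' (i :: j :: marked)
           end
  end.

Definition marked (s : seq bool) (i : nat) : bool := i \in match_aux s 0 [::] [::].

(* signature(x) in {0,1,⊔}^n : Some b = symbol b (marked), None = ⊔ *)
Definition signature (s : seq bool) : seq (option bool) :=
  [seq if marked s i then Some (nth false s i) else None | i <- iota 0 (size s)].

Definition nmarked (s : seq bool) : nat := count (marked s) (iota 0 (size s)).
Definition chain_k (s : seq bool) : nat := (nmarked s)./2.

Definition in_chain n (x z : n.-tuple bool) : bool := signature z == signature x.

Definition natdist (a b : nat) : nat := (a - b) + (b - a).

From mathcomp Require Import all_boot all_order all_algebra zify.
Import GRing.Theory Num.Theory Order.TTheory.
Set Implicit Arguments. Unset Strict Implicit. Unset Printing Implicit Defensive.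

(* Read 1 as a step +1 and 0 as a step -1 and let h be the height (prefix sum).
   A 1 at j is matched iff h comes back down to h(j) later, a 0 at j is matched
   iff h was below h(j) earlier; in particular the unmarked part is sorted.
   Turning the 1 at p into a 0 keeps h before p and lowers it by 2 after p.
   So only two kinds of coordinates change status: unmatched 1s left of p with
   height in [M-2, M), M the minimum of h on [p, n], and matched 0s right of p
   with height in (m, m+2], m the minimum of h on [0, p]. Heights increase
   strictly along the first kind and decrease strictly along the second, and the
   offsets M - h and h - m never agree across kinds, so together with p at most
   three coordinates change. For the chains: a Hamming difference outside the
   signature difference sits in the common sorted unmarked part, where it is
   paid for by the weight difference; and the number of marked coordinates is
   even and moves by at most 3, so k moves by at most 1. *)

Lemma count_nth_iota (T : Type) (x0 : T) (P : pred T) (s : seq T) :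
  count P s = count (fun i => P (nth x0 s i)) (iota 0 (size s)).
Proof. by rewrite -{1}(mkseq_nth x0 s) /mkseq count_map. Qed.

Lemma dist_nth (T : eqType) (a : T) (s t : seq T) : size s = size t ->
  dist s t = count (fun i => nth a s i != nth a t i) (iota 0 (size s)).
Proof.
move=> e; rewrite /dist (count_nth_iota (a, a)) size_zip e minnn.
by apply: eq_count => i /=; rewrite nth_zip.
Qed.

Lemma distC (T : eqType) (s t : seq T) : size s = size t -> dist s t = dist t s.
Proof.
case: s => [|a s] e; first by case: t e.
rewrite (dist_nth a e) (dist_nth a (esym e)) e.
by apply: eq_count => i; rewrite eq_sym.
Qed.

Lemma dist_eq1 (T : eqType) (a : T) (s t : seq T) : size s = size t -> dist s t = 1 ->
  exists2 p, p < size s & nth a s p != nth a t p /\ forall i, i != p -> nth a s i = nth a t i.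
Proof.
move=> e; rewrite (dist_nth a e) -size_filter.
set D := filter _ _; case ED: D => [|p [|]] //= _.
have : p \in D by rewrite ED mem_head.
rewrite mem_filter mem_iota /= => /andP [dp ps]; exists p => //; split=> // i ip.
case: (ltnP i (size s)) => [ilt | ige]; last by rewrite !nth_default -?e.
apply/eqP/negPn/negP => di.
have : i \in D by rewrite mem_filter mem_iota /= di ilt.
by rewrite ED inE (negbTE ip).
Qed.

Lemma leq_count_comb (l : seq nat) (a b c d : pred nat) k :
  (forall i, i \in l -> a i + b i <= c i + k * d i) ->
  count a l + count b l <= count c l + k * count d l.
Proof.
elim: l => [|i l IH] //= h.
have := h i (mem_head _ _).
have := IH (fun j hj => h j (mem_behead (s := i :: l) hj)).
lia.
Qed.

Lemma count_leq_size_inj (T U : eqType) (P : pred T) (f : T -> U) (l : seq T) (r : seq U) :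
  uniq l -> {in P &, injective f} -> (forall i, P i -> f i \in r) -> count P l <= size r.
Proof.
move=> ul finj fr; rewrite -size_filter -(size_map f); apply: uniq_leq_size.
  rewrite map_inj_in_uniq ?filter_uniq // => i i'.
  by rewrite !mem_filter => /andP [+ _] /andP [+ _]; apply: finj.
by move=> z /mapP [i]; rewrite mem_filter => /andP [pi _] ->; apply: fr.
Qed.

Lemma exists_argmin (f : nat -> int) a b : a <= b ->
  exists2 t, a <= t <= b & forall u, a <= u <= b -> (f t <= f u)%R.
Proof.
elim: b => [|b IH] ab.
  by exists 0 => [|u hu]; [lia | have -> : u = 0 by lia].
case: (leqP a b) => ab'; last first.
  by exists b.+1 => [|u hu]; [lia | have -> : u = b.+1 by lia].
have [t ht hm] := IH ab'.
case: (lerP (f t) (f b.+1)) => c.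
  exists t => [|u hu]; first lia.
  by case: (eqVneq u b.+1) => [->//|ne]; apply: hm; lia.
exists b.+1 => [|u hu]; first lia.
case: (eqVneq u b.+1) => [->//|ne]; have := hm u (ltac:(lia)); lia.
Qed.

Definition step (b : bool) : int := if b then 1%R else (-1)%R.

Definition height (s : seq bool) (t : nat) : int :=
  (\sum_(k < t) step (nth false s k))%R.

Lemma height0 s : height s 0 = 0%R.
Proof. by rewrite /height big_ord0. Qed.

Lemma heightS s t : height s t.+1 = (height s t + step (nth false s t))%R.
Proof. by rewrite /height big_ord_recr. Qed.

Lemma height_one s t : nth false s t -> height s t.+1 = (height s t + 1)%R.
Proof. by rewrite heightS /step => ->. Qed.

Lemma height_zero s t : ~~ nth false s t -> height s t.+1 = (height s t - 1)%R.
Proof. by rewrite heightS /step => /negbTE ->. Qed.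

Section Matching.
Variable s : seq bool.
Local Notation h := (height s).
Local Open Scope ring_scope.

Definition matched_by (i j : nat) : Prop :=
  if nth false s j then exists2 t, (j < t <= i)%N & h t <= h j
  else exists2 t, (t <= j)%N & h t < h j.

Definition open_at (i j : nat) : Prop :=
  [/\ (j < i)%N, nth false s j & forall t, (j < t <= i)%N -> h j < h t].

Lemma matched_by_mono i i' j : (i <= i')%N -> matched_by i j -> matched_by i' j.
Proof.
rewrite /matched_by => ii; case: ifP => // _ [t /andP [jt ti] ht].
by exists t => //; rewrite jt /=; lia.
Qed.

Lemma matched_byS i j : (j < i)%N -> matched_by i.+1 j ->
  matched_by i j \/ (open_at i j /\ h i.+1 <= h j).
Proof.
rewrite /matched_by => ji; case: ifP => sj; last by left.
move=> [t /andP [jt ti] ht].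
case: (boolP (has (fun u => h u <= h j) (iota j.+1 (i - j)))).
  by move=> /hasP [u]; rewrite mem_iota => ju hu; left; exists u => //; lia.
move=> /hasPn hlt; right.
have {}hlt u : (j < u <= i)%N -> h j < h u.
  by move=> ju; rewrite ltNge; apply: hlt; rewrite mem_iota; lia.
have et : t = i.+1 by case: (ltnP t i.+1) => c; [have := hlt t; lia | lia].
by split=> //; rewrite -et.
Qed.

Definition stack_inv (i : nat) (stk : seq nat) : Prop :=
  [/\ forall k, (k < size stk)%N -> h (nth 0%N stk k) = h i - k%:Z - 1,
      forall t, (t <= i)%N -> h i - (size stk)%:Z <= h t,
      exists2 t, (t <= i)%N & h t = h i - (size stk)%:Z
    & forall j : nat, j \in stk -> open_at i j].

Definition marks_inv (i : nat) (mk : seq nat) : Prop :=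
  forall j, j \in mk <-> (j < i)%N /\ matched_by i j.

Lemma stack_inv0 : stack_inv 0 [::].
Proof.
split=> // [t|]; first by rewrite leqn0 => /eqP ->; lia.
by exists 0%N => //; rewrite subr0.
Qed.

Lemma marks_inv0 : marks_inv 0 [::].
Proof. by move=> j; split=> // -[]. Qed.

(* Open positions have pairwise distinct heights, all within the range of
   heights occupied by the stack. *)
Lemma open_in_stack i stk j : stack_inv i stk -> open_at i j ->
  exists2 k, (k < size stk)%N & nth 0%N stk k = j.
Proof.
move=> [hstk hmin _ hopen] [ji sj hj].
have hji := hj i (ltac:(lia)); have hjmin := hmin j (ltnW ji).
pose k := absz (h i - h j - 1)%R.
have kE : k%:Z = h i - h j - 1 by rewrite /k; lia.
have ks : (k < size stk)%N by lia.
exists k => //.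
have [j'i _ hj'] : open_at i (nth 0%N stk k) := hopen _ (mem_nth 0%N ks).
have e := hstk _ ks.
case: (ltngtP j (nth 0%N stk k)) => // c.
- by have := hj (nth 0%N stk k); rewrite c (ltnW j'i) => /(_ isT); lia.
- by have := hj' j; rewrite c (ltnW ji) => /(_ isT); lia.
Qed.

Section Step.
Variables (i : nat) (stk mk : seq nat).
Hypotheses (hstk : stack_inv i stk) (hmk : marks_inv i mk).

Lemma stack_inv_push : nth false s i -> stack_inv i.+1 (i :: stk).
Proof.
move=> si; have hi := height_one si; have [hh hmin [t0 t0i ht0] hopen] := hstk.
split.
- by case=> [|k] /= hk; rewrite ?hh // hi; lia.
- move=> t; rewrite leq_eqVlt => /orP [/eqP -> | ]; first by rewrite /= hi; lia.
  by rewrite ltnS => /hmin /=; rewrite hi; lia.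
- by exists t0; [lia | rewrite ht0 hi /=; lia].
- move=> j; rewrite inE => /orP [/eqP -> | /hopen [ji sj hj]].
    split=> // t tij; have -> : t = i.+1 by lia.
    by rewrite hi; lia.
  split=> //; first lia.
  move=> t jt; case: (ltngtP t i.+1) => c; [apply: hj; lia | lia |].
  by rewrite c hi; have := hj i (ltac:(lia)); lia.
Qed.

Lemma marks_inv_push : nth false s i -> marks_inv i.+1 mk.
Proof.
move=> si j; have hi := height_one si; rewrite hmk; split.
  by move=> [ji mj]; split; [lia | apply: matched_by_mono mj].
move=> [ji mj]; have ij : j != i.
  apply/eqP=> e; move: mj; rewrite /matched_by e si => -[t ti].
  have -> : t = i.+1 by lia.
  by rewrite hi; lia.
split; first lia.
case: (matched_byS (ltac:(lia) : (j < i)%N) mj) => // -[[_ _ hj] hle].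
by have := hj i (ltac:(lia)); rewrite hi in hle; lia.
Qed.

Lemma stack_inv_skip : ~~ nth false s i -> stk = [::] -> stack_inv i.+1 [::].
Proof.
move=> si e; have hi := height_zero si; move: hstk; rewrite e => -[_ hmin _ _].
split=> //.
- move=> t; rewrite leq_eqVlt => /orP [/eqP -> | ]; first by rewrite /= hi; lia.
  by rewrite ltnS => /hmin /=; rewrite hi; lia.
- by exists i.+1 => //; rewrite /= subr0.
Qed.

Lemma marks_inv_skip : ~~ nth false s i -> stk = [::] -> marks_inv i.+1 mk.
Proof.
move=> si e j; rewrite hmk; split.
  by move=> [ji mj]; split; [lia | apply: matched_by_mono mj].
move=> [ji mj]; have ij : j != i.
  apply/eqP=> ej; move: mj; rewrite /matched_by ej (negbTE si) => -[t ti].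
  by move: hstk; rewrite e => -[_ hmin _ _]; have /= := hmin t ti; lia.
split; first lia.
case: (matched_byS (ltac:(lia) : (j < i)%N) mj) => // -[jo _].
by have [k] := open_in_stack hstk jo; rewrite e.
Qed.

Lemma stack_inv_pop j0 stk' : ~~ nth false s i -> stk = j0 :: stk' ->
  stack_inv i.+1 stk'.
Proof.
move=> si e; have hi := height_zero si.
move: hstk; rewrite e => -[hh hmin [t0 t0i ht0] hopen].
split.
- by move=> k hk; have := hh k.+1 hk; rewrite /= hi; lia.
- move=> t; rewrite leq_eqVlt => /orP [/eqP -> | ]; first by rewrite /= hi; lia.
  by rewrite ltnS => /hmin /=; rewrite hi; lia.
- by exists t0; [lia | rewrite ht0 hi /=; lia].
- move=> j hj; have [ji sj hjt] := hopen j (mem_behead (s := j0 :: stk') hj).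
  have ks : (index j stk' < size stk')%N by rewrite index_mem.
  have := hh (index j stk').+1 ks; rewrite /= nth_index // => ej.
  split=> //; first lia.
  move=> t jt; case: (ltngtP t i.+1) => c; [apply: hjt; lia | lia |].
  by rewrite c hi; lia.
Qed.

Lemma marks_inv_pop j0 stk' : ~~ nth false s i -> stk = j0 :: stk' ->
  marks_inv i.+1 [:: i, j0 & mk].
Proof.
move=> si e; have hi := height_zero si.
have [hh hmin [t0 t0i ht0] hopen] := hstk; rewrite e in hh hmin ht0 hopen.
have [j0i sj0 _] := hopen j0 (mem_head _ _); have e0 := hh 0%N isT.
move=> j; rewrite !inE; split.
  move=> /orP [/eqP -> | /orP [/eqP -> | /hmk [ji mj]]].
  - split=> //; rewrite /matched_by (negbTE si).
    by exists t0 => //; rewrite ht0 /=; lia.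
  - split; first lia.
    by rewrite /matched_by sj0; exists i.+1; [lia | rewrite hi e0; lia].
  - by split; [lia | apply: matched_by_mono mj].
move=> [ji mj]; case: (eqVneq j i) => [-> // | ji'].
case: (eqVneq j j0) => [-> // | jj0]; apply/orP; right; apply/orP; right.
apply/hmk; split; first lia.
case: (matched_byS (ltac:(lia) : (j < i)%N) mj) => // -[jo hle].
have [[|k] ks ek] := open_in_stack hstk jo; rewrite e /= in ek ks.
  by rewrite ek eqxx in jj0.
by have := hh k.+1 ks; rewrite /= ek hi in hle *; lia.
Qed.

End Step.

Lemma match_aux_inv suf i stk mk : drop i s = suf -> (i <= size s)%N ->
  stack_inv i stk -> marks_inv i mk -> marks_inv (size s) (match_aux suf i stk mk).
Proof.
elim: suf i stk mk => [|b suf IH] i stk mk hd isz hstk hmk /=.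
  by have <- : i = size s by move: (congr1 size hd); rewrite size_drop /=; lia.
have ilt : (i < size s)%N by rewrite ltnNge; apply/negP => hs; rewrite drop_oversize in hd.
move: hd; rewrite (drop_nth false ilt) => -[si hd].
case: b si => si; first by apply: IH => //; [exact: stack_inv_push | exact: marks_inv_push].
move/negbT: si => si; case E: stk => [|j0 stk']; apply: IH => //.
- exact: stack_inv_skip hstk si E.
- exact: marks_inv_skip hstk hmk si E.
- exact: stack_inv_pop hstk j0 stk' si E.
- exact: marks_inv_pop hstk hmk j0 stk' si E.
Qed.

End Matching.

Lemma marked_matched s j : marked s j <-> j < size s /\ matched_by s (size s) j.
Proof. exact: match_aux_inv (drop0 s) (leq0n _) (stack_inv0 s) (marks_inv0 s) j. Qed.

Lemma match_aux_uniq suf i (stk mk : seq nat) :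
  uniq (stk ++ mk) -> all (gtn i) (stk ++ mk) -> uniq (match_aux suf i stk mk).
Proof.
elim: suf i stk mk => [|b suf IH] i stk mk u hb /=.
  by rewrite cat_uniq in u; case/and3P: u.
have ni : i \notin stk ++ mk by apply/negP => /(allP hb); rewrite /= ltnn.
have hb' : all (gtn i.+1) (stk ++ mk) by apply: sub_all hb => j /=; lia.
case: b; first by apply: IH; rewrite /= ?ni ?ltnSn.
case: stk u hb hb' ni => [|j0 stk] u hb hb' ni; first exact: IH.
apply: IH.
  by rewrite (uniq_catCA stk [:: i; j0] mk) /= -cat_cons ni.
rewrite all_cat /= ltnSn; move: hb'; rewrite /= all_cat => /and3P [-> -> ->].
by rewrite !andbT.
Qed.

Lemma odd_match_aux suf i (stk mk : seq nat) :
  odd (size (match_aux suf i stk mk)) = odd (size mk).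
Proof.
elim: suf i stk mk => [|[] suf IH] i [|j0 stk] mk //=; by rewrite IH //= negbK.
Qed.

Lemma nmarked_even s : ~~ odd (nmarked s).
Proof.
set M := match_aux s 0 [::] [::].
have uM : uniq M by apply: match_aux_uniq.
suff -> : nmarked s = size M by rewrite odd_match_aux.
rewrite /nmarked /marked -/M -size_filter; apply/perm_size/uniq_perm => //.
  by rewrite filter_uniq // iota_uniq.
move=> j; rewrite mem_filter mem_iota /=; case jM: (j \in M) => //=.
by have [] := (marked_matched s j).1 jM.
Qed.

Lemma unmarked_sorted s i i' : i < i' < size s ->
  ~~ marked s i -> ~~ marked s i' -> nth false s i -> nth false s i'.
Proof.
move=> /andP [ii' i's] mi mi' si; apply/negPn/negP => si'.
case: (lerP (height s i') (height s i)) => c.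
  move/negP: mi; apply; apply/marked_matched.
  by split; [lia | rewrite /matched_by si; exists i'; lia].
move/negP: mi'; apply; apply/marked_matched; split=> //.
by rewrite /matched_by (negbTE si'); exists i => //; lia.
Qed.

Lemma marked_lt_size s j : marked s j -> j < size s.
Proof. by case/marked_matched. Qed.

Lemma size_signature s : size (signature s) = size s.
Proof. by rewrite size_map size_iota. Qed.

Lemma nth_signature s i :
  nth None (signature s) i = if marked s i then Some (nth false s i) else None.
Proof.
case: (ltnP i (size s)) => [ilt | ige]; first by rewrite (nth_map 0%N) ?size_iota // nth_iota.
rewrite nth_default ?size_signature //.
by case: (boolP (marked s i)) => // /marked_lt_size; rewrite ltnNge ige.
Qed.

Section Flip.
Variables (x y : seq bool) (p : nat).
Hypotheses (sxy : size x = size y) (pn : (p < size x)%N) (xp : nth false x p)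
  (yp : ~~ nth false y p) (exy : forall i, i != p -> nth false x i = nth false y i).
Local Notation n := (size x).
Local Notation hx := (height x).
Local Notation hy := (height y).
Local Open Scope ring_scope.

Lemma height_flip_le t : (t <= p)%N -> hx t = hy t.
Proof.
elim: t => [|t IH] tp; first by rewrite !height0.
by rewrite !heightS IH ?exy //; [apply/eqP | ]; lia.
Qed.

Lemma height_flip_gt t : (p < t)%N -> hx t = hy t + 2.
Proof.
move=> pt; have -> : t = (p.+1 + (t - p.+1))%N by lia.
elim: (t - p.+1)%N => [|k IH].
  by rewrite addn0 height_one // height_zero // height_flip_le //; lia.
rewrite addnS (heightS x (p.+1 + k)) (heightS y (p.+1 + k)) IH exy; first lia.
by apply/eqP; lia.
Qed.

Lemma height_flip_bounds t : hy t <= hx t <= hy t + 2.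
Proof.
by case: (leqP t p) => c; [rewrite height_flip_le | rewrite height_flip_gt]; lia.
Qed.

(* A 0 left of p, or a 1 right of p, compares its height with heights on its
   own side of p only, and there x and y differ by a constant. *)
Lemma marked_flip_eq i : (i < n)%N -> i != p -> nth false x i = (p < i)%N ->
  marked x i = marked y i.
Proof.
move=> iN ip e.
have eqm : matched_by x n i <-> matched_by y n i.
  rewrite /matched_by -(exy ip) e; case: ltnP => pi.
    by split=> -[t ti ht]; exists t => //; move: ht; rewrite !height_flip_gt //; lia.
  by split=> -[t ti ht]; exists t => //; move: ht; rewrite !height_flip_le //; lia.
apply/idP/idP => /marked_matched [_ mi]; apply/marked_matched.
  by rewrite -sxy; split=> //; apply: eqm.1.
by split=> //; apply: eqm.2; rewrite sxy.
Qed.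

Lemma marked_flip_zero i : (i < n)%N -> ~~ nth false x i -> (p < i)%N ->
  marked y i -> marked x i.
Proof.
move=> iN xi pi /marked_matched [_]; rewrite /matched_by -(exy (_ : i != p)) ?(negbTE xi);
  last by apply/eqP; lia.
move=> [t ti ht]; apply/marked_matched; split=> //; rewrite /matched_by (negbTE xi).
by exists t => //; have := height_flip_bounds t; rewrite (height_flip_gt pi); lia.
Qed.

Lemma marked_flip_one i : (i < n)%N -> nth false x i -> (i < p)%N ->
  marked x i -> marked y i.
Proof.
move=> iN xi ip /marked_matched [_]; rewrite /matched_by xi => -[t ti ht].
apply/marked_matched; split; first by rewrite -sxy.
rewrite /matched_by -(exy (_ : i != p)) ?xi; last by apply/eqP; lia.
exists t; first by rewrite -sxy.
by have := height_flip_bounds t; rewrite -(height_flip_le (ltnW ip)); lia.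
Qed.

Definition mark_changed (i : nat) : bool := marked x i != marked y i.

Lemma mark_changed_lt i : mark_changed i -> (i < n)%N.
Proof.
rewrite /mark_changed; case: (boolP (marked x i)) => [/marked_lt_size // | _].
by rewrite sxy => /negPn /marked_lt_size.
Qed.

Lemma mark_changed_zero i : i != p -> mark_changed i -> ~~ nth false x i ->
  [/\ (p < i)%N, exists2 t, (t <= p)%N & hx t < hx i,
      forall t, (t <= p)%N -> hx i <= hx t + 2
    & forall t, (p < t <= i)%N -> hx i <= hx t].
Proof.
move=> ip ch xi; have iN := mark_changed_lt ch.
have pi : (p < i)%N.
  rewrite ltnNge; apply/negP => ipl; move: ch.
  rewrite /mark_changed marked_flip_eq ?eqxx // (negbTE xi).
  by apply/esym/negbTE; rewrite -leqNgt.
have mx : marked x i.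
  move: ch; rewrite /mark_changed.
  case: (boolP (marked y i)) => [my | _]; last by case: (marked x i).
  by rewrite (marked_flip_zero iN xi pi my).
have my : ~~ marked y i by move: ch; rewrite /mark_changed mx; case: (marked y i).
have yi : ~~ nth false y i by rewrite -exy.
have ymin t : (t <= i)%N -> hy i <= hy t.
  move=> ti; rewrite leNgt; apply/negP => lt; move/negP: my; apply; apply/marked_matched.
  by split; [rewrite -sxy | rewrite /matched_by (negbTE yi); exists t].
have hxi := height_flip_gt pi.
have [_] := (marked_matched x i).1 mx; rewrite /matched_by (negbTE xi) => -[t ti ht].
have tp : (t <= p)%N.
  rewrite leqNgt; apply/negP => pt; have := ymin t ti.
  by rewrite (height_flip_gt pt) hxi in ht; lia.
split=> //; first by exists t.
  by move=> u up; have := ymin u (ltac:(lia)); rewrite hxi (height_flip_le up); lia.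
by move=> u /andP [pu ui]; have := ymin u ui; rewrite hxi (height_flip_gt pu); lia.
Qed.

Lemma mark_changed_one i : i != p -> mark_changed i -> nth false x i ->
  [/\ (i < p)%N, forall t, (i < t <= n)%N -> hx i < hx t
    & exists2 t, (p < t <= n)%N & hx t <= hx i + 2].
Proof.
move=> ip ch xi; have iN := mark_changed_lt ch.
have ipl : (i < p)%N.
  rewrite ltnNge; apply/negP => pi; move: ch.
  by rewrite /mark_changed marked_flip_eq ?eqxx // xi; apply/esym; move/eqP: ip; lia.
have my : marked y i.
  move: ch; rewrite /mark_changed.
  case: (boolP (marked x i)) => [mx | _]; last by case: (marked y i).
  by rewrite (marked_flip_one iN xi ipl mx).
have mx : ~~ marked x i by move: ch; rewrite /mark_changed my; case: (marked x i).
have xmin t : (i < t <= n)%N -> hx i < hx t.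
  move=> ti; rewrite ltNge; apply/negP => le; move/negP: mx; apply; apply/marked_matched.
  by split=> //; rewrite /matched_by xi; exists t.
have hxi := height_flip_le (ltnW ipl).
have [_] := (marked_matched y i).1 my; rewrite /matched_by -(exy ip) xi -sxy => -[t ti ht].
have pt : (p < t)%N.
  rewrite ltnNge; apply/negP => tp; have := xmin t ti.
  by rewrite (height_flip_le tp) hxi; lia.
split=> //; exists t => //; first lia.
by rewrite (height_flip_gt pt) hxi; lia.
Qed.

Section Minima.
Variables tm tM : nat.
Hypotheses (tmp : (tm <= p)%N) (hm : forall u, (u <= p)%N -> hx tm <= hx u)
  (ptM : (p <= tM <= n)%N) (hM : forall u, (p <= u <= n)%N -> hx tM <= hx u).

Definition flip_code (i : nat) : int :=
  if i == p then 0 else if nth false x i then hx tM - hx i else hx i - hx tm.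

Lemma flip_code_zero i : i != p -> mark_changed i -> ~~ nth false x i ->
  [/\ (p < i)%N, 0 < flip_code i <= 2, hx tM <= hx i - 1
    & forall t, (p < t <= i)%N -> hx i <= hx t].
Proof.
move=> ip ch xi; have iN := mark_changed_lt ch.
have [pi [t tp ht] hup hmin] := mark_changed_zero ip ch xi.
rewrite /flip_code (negbTE ip) (negbTE xi).
have := hm tp; have := hup tm tmp; have := @hM i.+1 (ltac:(lia)).
by rewrite height_zero //; split=> //; lia.
Qed.

Lemma flip_code_one i : i != p -> mark_changed i -> nth false x i ->
  [/\ (i < p)%N, 0 < flip_code i <= 2, hx tm <= hx i
    & forall t, (i < t <= n)%N -> hx i < hx t].
Proof.
move=> ip ch xi; have [ipl xmin [t pt ht]] := mark_changed_one ip ch xi.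
rewrite /flip_code (negbTE ip) xi.
have := xmin tM (ltac:(lia)); have := @hM t (ltac:(lia)); have := @hm i (ltac:(lia)).
by split=> //; lia.
Qed.

Lemma flip_code_range i : (i == p) || mark_changed i -> flip_code i \in [:: 0; 1; 2].
Proof.
rewrite !inE; have [-> _ | ip /= ch] := eqVneq i p; first by rewrite /flip_code eqxx.
case: (boolP (nth false x i)) => xi.
  by have [_ ? _ _] := flip_code_one ip ch xi; lia.
by have [_ ? _ _] := flip_code_zero ip ch xi; lia.
Qed.

Lemma flip_code_inj : {in [pred i | (i == p) || mark_changed i] &, injective flip_code}.
Proof.
move=> i i'; rewrite !inE.
wlog ii' : i i' / (i < i')%N => [W hi hi' e | hi hi'].
  by case: (ltngtP i i') => // c; [apply: W | apply/esym/W].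
have code_p : flip_code p = 0 by rewrite /flip_code eqxx.
have code_pos j : j != p -> mark_changed j -> 0 < flip_code j.
  move=> jp ch; case: (boolP (nth false x j)) => xj.
    by have [_ ? _ _] := flip_code_one jp ch xj; lia.
  by have [_ ? _ _] := flip_code_zero jp ch xj; lia.
have [ip | ip] := eqVneq i p; have [ip' | ip'] := eqVneq i' p.
- by move: ii'; rewrite ip ip' ltnn.
- rewrite (negbTE ip') /= in hi'; have := code_pos i' ip' hi'.
  by rewrite ip code_p; lia.
- rewrite (negbTE ip) /= in hi; have := code_pos i ip hi.
  by rewrite ip' code_p; lia.
rewrite (negbTE ip) (negbTE ip') /= in hi hi' => e; exfalso; move: e.
have i'N := mark_changed_lt hi'.
case: (boolP (nth false x i)) => xi; case: (boolP (nth false x i')) => xi'.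
- have [_ _ _ hup] := flip_code_one ip hi xi; have := hup i' (ltac:(lia)).
  by rewrite /flip_code (negbTE ip) (negbTE ip') xi xi'; lia.
- have [_ _ ? _] := flip_code_one ip hi xi; have [_ _ ? _] := flip_code_zero ip' hi' xi'.
  by rewrite /flip_code (negbTE ip) (negbTE ip') xi (negbTE xi'); lia.
- have [_ _ ? _] := flip_code_zero ip hi xi; have [_ _ ? _] := flip_code_one ip' hi' xi'.
  by rewrite /flip_code (negbTE ip) (negbTE ip') (negbTE xi) xi'; lia.
- have [pi _ _ _] := flip_code_zero ip hi xi; have [_ _ _ hdn] := flip_code_zero ip' hi' xi'.
  have := hdn i.+1 (ltac:(lia)); rewrite height_zero //.
  by rewrite /flip_code (negbTE ip) (negbTE ip') (negbTE xi) (negbTE xi'); lia.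
Qed.

End Minima.

Lemma dist_signature_flip : (dist (signature x) (signature y) <= 3)%N.
Proof.
rewrite (dist_nth None) ?size_signature //.
have [tm /andP [_ tmp] hm] := exists_argmin hx (leq0n p).
have [tM ptM hM] := exists_argmin hx (ltnW pn).
apply: leq_trans (count_leq_size_inj (iota_uniq 0 n) (flip_code_inj tmp hm ptM hM)
  (flip_code_range tmp hm ptM hM)).
apply: sub_count => i /=; rewrite !nth_signature.
have [// | ip /=] := eqVneq i p; apply: contraR; rewrite negbK => /eqP.
by rewrite /mark_changed (exy ip) => ->.
Qed.

End Flip.

Lemma dist_signature_dist1 (x y : seq bool) : size x = size y -> dist x y = 1 ->
  dist (signature x) (signature y) <= 3.
Proof.
move=> sxy /(dist_eq1 false sxy) [p pn [dp exy]].
case xp: (nth false x p) in dp.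
  by apply: (dist_signature_flip sxy pn xp) => //; move: dp; case: (nth false y p).
rewrite distC ?size_signature //.
apply: (dist_signature_flip (esym sxy) _ _ (negbT xp)); first by rewrite -sxy.
  by move: dp; case: (nth false y p).
by move=> i ip; rewrite exy.
Qed.

Lemma unmarked_comparable (c c' : seq bool) : size c = size c' ->
  (forall i, ~~ marked c i -> ~~ marked c' i -> nth false c i -> nth false c' i) \/
  (forall i, ~~ marked c' i -> ~~ marked c i -> nth false c' i -> nth false c i).
Proof.
move=> e.
set bad := fun i => [&& ~~ marked c i, ~~ marked c' i, nth false c i & ~~ nth false c' i].
case: (boolP (has bad (iota 0 (size c)))) => [/hasP [i0] | /hasPn nobad]; last first.
  left=> i mi mi' ci; case: (ltnP i (size c)) => [ilt | ige].
    apply/negPn/negP => ci'; have := nobad i.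
    by rewrite mem_iota ilt /bad mi mi' ci ci' => /(_ isT).
  by rewrite nth_default in ci.
rewrite mem_iota /= => i0N /and4P [m0 m0' c0 c0']; right=> i mi' mi ci'.
have iN : i < size c.
  by rewrite ltnNge; apply/negP => ige; move: ci'; rewrite nth_default // -e.
case: (ltngtP i i0) => c1.
- by case/negP: c0'; apply: (unmarked_sorted _ mi' m0' ci'); rewrite c1 -e.
- by apply: (unmarked_sorted _ m0 mi c0); rewrite c1.
- by rewrite -c1 ci' in c0'.
Qed.

Lemma dist_weight_leq (c c' : seq bool) : size c = size c' ->
  (forall i, ~~ marked c i -> ~~ marked c' i -> nth false c i -> nth false c' i) ->
  dist c c' + weight c <= weight c' + 2 * dist (signature c) (signature c').
Proof.
move=> e sorted.
rewrite (dist_nth false e) (dist_nth None) ?size_signature // /weight.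
rewrite (count_nth_iota false) (count_nth_iota false _ c') -e.
apply: leq_count_comb => i _; rewrite !nth_signature; have := sorted i.
by case: (marked c i) (marked c' i) (nth false c i) (nth false c' i)
  => [] [] [] [] //= /(_ isT isT isT).
Qed.

Lemma dist_le_weight_signature (c c' : seq bool) : size c = size c' ->
  dist c c' <= natdist (weight c) (weight c') + 2 * dist (signature c) (signature c').
Proof.
move=> e; rewrite /natdist; case: (unmarked_comparable e) => sorted.
  by have := dist_weight_leq e sorted; lia.
have := dist_weight_leq (esym e) sorted.
by rewrite (distC e) (distC (s := signature c)) ?size_signature //; lia.
Qed.

Lemma nmarked_leq (c c' : seq bool) : size c = size c' ->
  nmarked c <= nmarked c' + dist (signature c) (signature c').
Proof.
move=> e; rewrite (dist_nth None) ?size_signature // /nmarked -e.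
have := @leq_count_comb (iota 0 (size c)) (marked c) pred0 (marked c')
  (fun i => nth None (signature c) i != nth None (signature c') i) 1.
rewrite count_pred0 addn0 mul1n; apply=> i _; rewrite !nth_signature.
by case: (marked c i) (marked c' i) => [] [] //=; rewrite addn0 ?addn1.
Qed.

Lemma chain_k_close (x y : seq bool) : size x = size y ->
  dist (signature x) (signature y) <= 3 -> natdist (chain_k x) (chain_k y) <= 1.
Proof.
move=> e d3; have := nmarked_leq e; have := nmarked_leq (esym e).
rewrite (distC (s := signature y)) ?size_signature //.
have := odd_double_half (nmarked x); have := odd_double_half (nmarked y).
rewrite (negbTE (nmarked_even x)) (negbTE (nmarked_even y)) -!muln2 /natdist /chain_k; lia.
Qed.

Theorem mainTheorem2 (n : nat) (x y : n.-tuple bool) :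
  dist x y = 1 ->
  [/\ dist (signature x) (signature y) <= 3,
      natdist (chain_k x) (chain_k y) <= 1
    & forall (j j' : nat) (c c' : n.-tuple bool),
        chain_k x <= j <= n - chain_k x ->
        chain_k y <= j' <= n - chain_k y ->
        in_chain x c -> weight c = j ->
        in_chain y c' -> weight c' = j' ->
        dist c c' <= natdist j j' + 6].
Proof.
move=> d1; have sxy : size x = size y by rewrite !size_tuple.
have d3 := dist_signature_dist1 sxy d1.
split=> //; first exact: chain_k_close.
move=> j j' c c' _ _ /eqP sc <- /eqP sc' <-.
have scc : size c = size c' by rewrite !size_tuple.
by have := dist_le_weight_signature scc; rewrite sc sc'; lia.
Qed.
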